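(* Let $D$ be a square-free integer, let $\mathbb{Z}[\sqrt{D}]$ denote the ring of integers of $\mathbb{Q}(\sqrt{D})$, let $p$ be a prime integer which is irreducible but not prime in $\mathbb{Z}[\sqrt{D}]$, let $z\in I_p(D)$ and $k=\lVert z\rVert/p$. Then $A(p,z)$ has property (CZ) if and only if the following holds, according to the case: Case 1 ($D\equiv 1\pmod 4$ and $z=\frac{z_1+z_2\sqrt{D}}{2}$ with $z_1,z_2$ odd integers): there exist integers $b_1,b_2$ such that the numbers $a_1=\frac{4p-z_1b_1+z_2b_2D}{2p}$, $a_2=\frac{z_2b_1-z_1b_2}{2p}$, $c_1=\frac{-(z_1^2+z_2^2D)b_1+2z_1z_2Db_2+4z_1p}{4p^2}$, $c_2=\frac{2z_1z_2b_1-(z_1^2+z_2^2D)b_2-4z_2p}{4p^2}$ are integers, $0=(p+k)b_1^2-(p+k)Db_2^2-2z_1b_1+2z_2b_2D+4p-4p^2$, and the elements $\frac{a_1+a_2\sqrt D}{2},\frac{b_1+b_2\sqrt D}{2},\frac{c_1+c_2\sqrt D}{2}$ lie in $\mathbb{Z}[\sqrt D]$; Case 2 ($D\equiv 1\pmod 4$ and $z=z_1+z_2\sqrt{D}$ with $z_1,z_2\in\mathbb{Z}$): there exist integers $b_1,b_2$ such that the numbers $a_1=\frac{2p-z_1b_1+z_2b_2D}{p}$, $a_2=\frac{z_2b_1-z_1b_2}{p}$, $c_1=\frac{-(z_1^2+z_2^2D)b_1+2z_1z_2Db_2+2z_1p}{p^2}$, $c_2=\frac{2z_1z_2b_1-(z_1^2+z_2^2D)b_2-2z_2p}{p^2}$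 are integers, $0=(p+k)b_1^2-(p+k)Db_2^2-4z_1b_1+4z_2b_2D+4p-4p^2$, and the elements $\frac{a_1+a_2\sqrt D}{2},\frac{b_1+b_2\sqrt D}{2},\frac{c_1+c_2\sqrt D}{2}$ lie in $\mathbb{Z}[\sqrt D]$; Case 3 ($D\equiv 2,3\pmod 4$ and $z=z_1+z_2\sqrt{D}$ with $z_1,z_2\in\mathbb{Z}$): there exist integers $b_1,b_2$ such that the numbers $a_1=\frac{p-z_1b_1+z_2b_2D}{p}$, $a_2=\frac{z_2b_1-z_1b_2}{p}$, $c_1=\frac{-(z_1^2+z_2^2D)b_1+2z_1z_2Db_2+z_1p}{p^2}$, $c_2=\frac{2z_1z_2b_1-(z_1^2+z_2^2D)b_2-z_2p}{p^2}$ are integers and $0=(p+k)b_1^2-(p+k)Db_2^2-2z_1b_1+2z_2Db_2+p-p^2$.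
   Context: $\mathbb{Z}[\sqrt{D}]=\{a+b\sqrt{D}:a,b\in\mathbb{Z}\}$ if $D\equiv 2,3 \pmod 4$ and $\{\frac{a+b\sqrt{D}}{2}:a,b\in\mathbb{Z},a\equiv b \pmod 2\}$ if $D\equiv 1\pmod 4$. $\bar z$ denotes the conjugate and $\lVert z\rVert=z\bar z$ the norm. $I_p(D)$ is the set of all non-unit $z\in\mathbb{Z}[\sqrt{D}]$ such that $z\notin\langle p\rangle$ but there exists $m\notin\langle p\rangle$ with $zm\in\langle p\rangle$ (for such $z$, $p$ divides $\lVert z\rVert$). $A(p,z)=\begin{pmatrix} p & z\\ \bar z & \lVert z\rVert/p\end{pmatrix}$. A matrix $A(p,z)$ has property (CZ) if there exist $a,b,c\in\mathbb{Z}[\sqrt{D}]$ with $a(1-a)=bc$ such that $A(p,z)=\begin{pmatrix} a&b\\ c&1-a\end{pmatrix}\begin{pmatrix}\bar a&\bar c\\ \bar b&1-\bar a\end{pmatrix}$. *)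

From HB Require Import structures.
From mathcomp Require Import all_boot all_order all_algebra.
Set Implicit Arguments. Unset Strict Implicit. Unset Printing Implicit Defensive.
Import Order.TTheory GRing.Theory Num.Theory.
Local Open Scope ring_scope.

(* Elements of Q(sqrt D) are represented by pairs (x, y) of rationals,
   standing for x + y * sqrt D.  The arithmetic below is that of Q(sqrt D). *)
Definition qd := (rat * rat)%type.

Definition qzero : qd := (0, 0).
Definition qone : qd := (1, 0).
Definition qint (n : int) : qd := (n%:~R, 0).
Definition qadd (u v : qd) : qd := (u.1 + v.1, u.2 + v.2).
Definition qopp (u : qd) : qd := (- u.1, - u.2).
Definition qsub (u v : qd) : qd := qadd u (qopp v).
Definition qmul (D : int) (u v : qd) : qd :=
  (u.1 * v.1 + D%:~R * u.2 * v.2, u.1 * v.2 + u.2 * v.1).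
Definition qconj (u : qd) : qd := (u.1, - u.2).
Definition qnorm (D : int) (u : qd) : rat := u.1 ^+ 2 - D%:~R * u.2 ^+ 2.

Definition squarefree_int (D : int) : Prop :=
  forall n : int, (n * n %| D)%Z -> n * n = 1.

Definition in_OD (D : int) (u : qd) : Prop :=
  if (D %% 4)%Z == 1 then
    exists m n : int, u = (m%:~R / 2, n%:~R / 2) /\ (2 %| m - n)%Z
  else exists m n : int, u = (m%:~R, n%:~R).

Definition qdvd (D : int) (a b : qd) : Prop :=
  exists c, in_OD D c /\ b = qmul D a c.
Definition in_ideal (D : int) (p u : qd) : Prop := qdvd D p u.

Definition qunit (D : int) (u : qd) : Prop :=
  in_OD D u /\ exists v, in_OD D v /\ qmul D u v = qone.

Definition irreducible_OD (D : int) (u : qd) : Prop :=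
  [/\ in_OD D u, u <> qzero, ~ qunit D u &
      forall x y, in_OD D x -> in_OD D y -> u = qmul D x y -> qunit D x \/ qunit D y].

Definition prime_OD (D : int) (u : qd) : Prop :=
  [/\ in_OD D u, u <> qzero, ~ qunit D u &
      forall x y, in_OD D x -> in_OD D y -> qdvd D u (qmul D x y) ->
        qdvd D u x \/ qdvd D u y].

Definition Ip (D : int) (p : qd) (z : qd) : Prop :=
  [/\ in_OD D z, ~ qunit D z, ~ in_ideal D p z &
      exists m, [/\ in_OD D m, ~ in_ideal D p m & in_ideal D p (qmul D z m)]].

Record M2 := mkM2 { m11 : qd; m12 : qd; m21 : qd; m22 : qd }.

Definition mulM2 (D : int) (A B : M2) : M2 :=
  mkM2 (qadd (qmul D (m11 A) (m11 B)) (qmul D (m12 A) (m21 B)))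
       (qadd (qmul D (m11 A) (m12 B)) (qmul D (m12 A) (m22 B)))
       (qadd (qmul D (m21 A) (m11 B)) (qmul D (m22 A) (m21 B)))
       (qadd (qmul D (m21 A) (m12 B)) (qmul D (m22 A) (m22 B))).

Definition Apz (D : int) (p : nat) (z : qd) : M2 :=
  mkM2 (qint p) z (qconj z) (qnorm D z / p%:R, 0).

Definition CZ (D : int) (p : nat) (z : qd) : Prop :=
  exists a b c : qd,
    [/\ in_OD D a, in_OD D b, in_OD D c,
        qmul D a (qsub qone a) = qmul D b c &
        Apz D p z =
          mulM2 D (mkM2 a b c (qsub qone a))
                  (mkM2 (qconj a) (qconj c) (qconj b) (qsub qone (qconj a)))].

From HB Require Import structures.
From mathcomp Require Import all_boot all_order all_algebra ring.
Import GRing.Theory Num.Theory.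
Local Open Scope ring_scope.

(* Write M = [[a, b], [c, 1 - a]]; as a (1 - a) = b c, M is an idempotent of
   trace 1.  Expanding M M^* = A(p, z) with this relation gives
   p (1 - a) = conj z * b and p c = conj z * a, so M is determined by b, and
   such an M exists iff ||a|| + ||b|| = p for a = 1 - conj z * b / p.  The three
   cases spell out this condition and the integrality of a, b, c in
   coordinates. *)

Section IdempotentFactorization.
Context {R : comPzRingType} (conj : {rmorphism R -> R}).
Hypothesis conjK : involutive conj.
Context (p p' z w : R).
Hypotheses (pV : p * p' = 1) (conj_p' : conj p' = p') (norm_z : z * conj z = p * w).

Definition cz_equations (a b c : R) : Prop :=
  a * (1 - a) = b * c /\
  [/\ p = a * conj a + b * conj b, z = a * conj c + b * (1 - conj a),
      conj z = c * conj a + (1 - a) * conj b & w = c * conj c + (1 - a) * (1 - conj a)].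

Lemma cz_equationsE a b c :
  cz_equations a b c <->
  [/\ a = 1 - p' * conj z * b, c = p' * conj z * a & p = a * conj a + b * conj b].
Proof.
split=> [[abc [E11 _ E21 _]] | [ea ec E11]].
  have zb : conj z * b = p * (1 - a) by ring: E21 E11 (esym abc).
  have za : conj z * a = p * c by ring: E21 E11 (esym abc).
  by split=> //; [ring: zb pV | ring: za pV].
have one_a : 1 - a = p' * conj z * b by rewrite ea; ring.
have conj_c : conj c = p' * z * conj a by rewrite ec !rmorphM conj_p' conjK.
have conj_one_a : 1 - conj a = p' * z * conj b.
  by rewrite -(rmorph1 conj) -rmorphB one_a !rmorphM conj_p' conjK.
split; first by rewrite one_a ec; ring.
split=> //; rewrite ?conj_c ?conj_one_a ?one_a ?ec.
- transitivity (p' * z * (a * conj a + b * conj b)); last by ring.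
  by rewrite -E11; ring: pV.
- transitivity (p' * conj z * (a * conj a + b * conj b)); last by ring.
  by rewrite -E11; ring: pV.
- transitivity (p' * p' * (z * conj z) * (a * conj a + b * conj b)); last by ring.
  by rewrite -E11 norm_z; ring: pV.
Qed.

End IdempotentFactorization.

Arguments cz_equationsE {R conj} conjK {p p' z w}.

(* [qd] with the multiplication of Q(sqrt D).  Products must be typed at
   [qf D]: on [qd] itself the canonical ring is the componentwise [rat * rat]. *)
Definition qf (D : int) : Type := qd.
HB.instance Definition _ (D : int) := GRing.Zmodule.on (qf D).

Section QuadraticFieldRing.
Variable D : int.

Lemma qmulA : associative (qmul D : qf D -> qf D -> qf D).
Proof. by move=> [? ?] [? ?] [? ?]; congr pair; rewrite /=; ring. Qed.

Lemma qmulC : commutative (qmul D : qf D -> qf D -> qf D).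
Proof. by move=> [? ?] [? ?]; congr pair; rewrite /=; ring. Qed.

Lemma qmul1 : left_id (qone : qf D) (qmul D).
Proof. by move=> [? ?]; congr pair; rewrite /=; ring. Qed.

Lemma qmulDl : left_distributive (qmul D : qf D -> qf D -> qf D) +%R.
Proof. by move=> [? ?] [? ?] [? ?]; congr pair; rewrite /=; ring. Qed.

End QuadraticFieldRing.

HB.instance Definition _ (D : int) :=
  GRing.Zmodule_isComPzRing.Build (qf D) (@qmulA D) (@qmulC D) (@qmul1 D) (@qmulDl D).

Definition conjq (D : int) : qf D -> qf D := qconj.

Lemma conjq_zmod_morphism D : zmod_morphism (conjq D).
Proof. by move=> [? ?] [? ?]; congr pair; rewrite /=; ring. Qed.

Lemma conjq_monoid_morphism D : monoid_morphism (conjq D).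
Proof.
split; first by congr pair; rewrite /= oppr0.
by move=> [? ?] [? ?]; congr pair; rewrite /=; ring.
Qed.

HB.instance Definition _ D :=
  GRing.isZmodMorphism.Build (qf D) (qf D) (conjq D) (@conjq_zmod_morphism D).
HB.instance Definition _ D :=
  GRing.isMonoidMorphism.Build (qf D) (qf D) (conjq D) (@conjq_monoid_morphism D).

Lemma conjqK D : involutive (conjq D).
Proof. by move=> [? ?]; rewrite /conjq /qconj /= opprK. Qed.

Definition qrat (D : int) (r : rat) : qf D := (r, 0).

Lemma conjq_rat D r : conjq D (qrat D r) = qrat D r.
Proof. by rewrite /conjq /qconj /= oppr0. Qed.

Lemma mul_conjq D (u : qf D) : u * conjq D u = qrat D (qnorm D u).
Proof. by case: u => [? ?]; congr pair; rewrite /qnorm /=; ring. Qed.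

Lemma qrat_conj_mulE D r (z u : qf D) :
  qrat D r * conjq D z * u =
  (r * (z.1 * u.1 - D%:~R * z.2 * u.2), r * (z.1 * u.2 - z.2 * u.1)) :> qd.
Proof. by case: z u => [? ?] [? ?]; congr pair; rewrite /=; ring. Qed.

Lemma mkM2_eq x y u v x' y' u' v' :
  mkM2 x y u v = mkM2 x' y' u' v' <-> [/\ x = x', y = y', u = u' & v = v'].
Proof. by split=> [[-> -> -> ->] | [-> -> -> ->]]. Qed.

Lemma CZ_factorizationE D p (z a b c : qd) :
  (qmul D a (qsub qone a) = qmul D b c /\
   Apz D p z = mulM2 D (mkM2 a b c (qsub qone a))
                     (mkM2 (qconj a) (qconj c) (qconj b) (qsub qone (qconj a)))) <->
  cz_equations (conjq D) (qint p) z (qnorm D z / p%:R, 0) a b c.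
Proof. by rewrite mkM2_eq. Qed.

Definition cz_a (D : int) (p : nat) (z b : qf D) : qf D :=
  1 - qrat D p%:R^-1 * conjq D z * b.

Definition cz_c (D : int) (p : nat) (z b : qf D) : qf D :=
  qrat D p%:R^-1 * conjq D z * cz_a D p z b.

Lemma CZ_iff D p (z : qd) : (0 < p)%N ->
  CZ D p z <-> exists b, in_OD D b /\
    [/\ in_OD D (cz_a D p z b), in_OD D (cz_c D p z b)
      & qnorm D (cz_a D p z b) + qnorm D b = p%:R].
Proof.
move=> p_gt0; have p_neq0 : (p%:R : rat) != 0 by rewrite pnatr_eq0 -lt0n.
have pV : (qint p : qf D) * qrat D p%:R^-1 = 1.
  by congr pair; rewrite /= !(mulr0, mul0r, addr0) ?mulfV.
have norm_z : (z : qf D) * conjq D z = (qint p : qf D) * (qnorm D z / p%:R, 0).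
  by rewrite mul_conjq; congr pair; rewrite /=; field.
have czE := cz_equationsE (@conjqK D) pV (conjq_rat _ _) norm_z.
have normE (a b : qf D) :
    (qint p : qf D) = a * conjq D a + b * conjq D b <-> qnorm D a + qnorm D b = p%:R.
  rewrite !mul_conjq; split=> [/(congr1 fst) /= <- // | E].
  by congr pair; rewrite /= ?E ?addr0.
split=> [[a [b [c [Ha Hb Hc E0 EM]]]] | [b [Hb [Ha Hc /normE Hn]]]].
  have /czE [ea ec /normE Hn] : cz_equations (conjq D) (qint p) z
      (qnorm D z / p%:R, 0) a b c by apply/CZ_factorizationE.
  by subst a c; exists b.
have /CZ_factorizationE[E0 EM] : cz_equations (conjq D) (qint p) z
    (qnorm D z / p%:R, 0) (cz_a D p z b) b (cz_c D p z b) by apply/czE.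
by exists (cz_a D p z b), b, (cz_c D p z b).
Qed.

Lemma cz_aE D p (z b : qf D) :
  cz_a D p z b =
  (1 - (z.1 * b.1 - D%:~R * z.2 * b.2) / p%:R, (z.2 * b.1 - z.1 * b.2) / p%:R) :> qd.
Proof. by rewrite /cz_a qrat_conj_mulE; congr pair; rewrite /=; ring. Qed.

Lemma cz_cE D p (z b : qf D) :
  cz_c D p z b =
  ((z.1 * (cz_a D p z b).1 - D%:~R * z.2 * (cz_a D p z b).2) / p%:R,
   (z.1 * (cz_a D p z b).2 - z.2 * (cz_a D p z b).1) / p%:R) :> qd.
Proof. by rewrite /cz_c qrat_conj_mulE !(mulrC p%:R^-1). Qed.

Lemma in_OD_halves_int {D : int} {x y : rat} : (D %% 4)%Z = 1 ->
  in_OD D (x / 2, y / 2) -> x \is a Num.int /\ y \is a Num.int.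
Proof.
rewrite /in_OD => ->; rewrite eqxx => -[m [n [[Ex Ey] _]]].
by rewrite (mulIf _ Ex) ?(mulIf _ Ey) ?intr_int.
Qed.

Lemma in_OD_int {D : int} {x y : rat} : (D %% 4)%Z != 1 ->
  in_OD D (x, y) <-> x \is a Num.int /\ y \is a Num.int.
Proof.
rewrite /in_OD => /negbTE ->.
split=> [[m [n [-> ->]]] | [/intrP[m ->] /intrP[n ->]]]; last by exists m, n.
by rewrite !intr_int.
Qed.

Lemma ex_in_OD_halves D (P : qd -> Prop) : (D %% 4)%Z = 1 ->
  (exists b, in_OD D b /\ P b) <->
  exists b1 b2 : int, in_OD D (b1%:~R / 2, b2%:~R / 2) /\ P (b1%:~R / 2, b2%:~R / 2).
Proof.
move=> D1; split=> [[b [Hb HP]] | [b1 [b2 HP]]]; last by exists (b1%:~R / 2, b2%:~R / 2).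
by move: (Hb); rewrite {1}/in_OD D1 eqxx => -[b1 [b2 [Eb _]]]; exists b1, b2; rewrite -Eb.
Qed.

Lemma ex_in_OD_int D (P : qd -> Prop) : (D %% 4)%Z != 1 ->
  (exists b, in_OD D b /\ P b) <-> exists b1 b2 : int, P (b1%:~R, b2%:~R).
Proof.
move=> D1; split=> [[[x y] [/(in_OD_int D1)[/intrP[b1 ->] /intrP[b2 ->]] HP]] | ].
  by exists b1, b2.
by case=> b1 [b2 HP]; exists (b1%:~R, b2%:~R); split=> //; apply/in_OD_int; rewrite ?intr_int.
Qed.

Lemma ex2_iff (A B : Type) (P Q : A -> B -> Prop) :
  (forall x y, P x y <-> Q x y) -> (exists x y, P x y) <-> (exists x y, Q x y).
Proof. by move=> PQ; split=> -[x [y /PQ H]]; exists x, y. Qed.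

Lemma eq_iff_scaled {s x y e : rat} : s != 0 -> e = s * (x - y) -> x = y <-> 0 = e.
Proof.
move=> s_neq0 ->; split=> [-> | /esym/eqP]; first by rewrite subrr mulr0.
by rewrite mulf_eq0 (negbTE s_neq0) subr_eq0 => /eqP.
Qed.

Lemma in_OD_halves_conditions D (b a c : qd) (A1 A2 C1 C2 : rat) (P Q : Prop) :
  (D %% 4)%Z = 1 -> a = (A1 / 2, A2 / 2) -> c = (C1 / 2, C2 / 2) -> (P <-> Q) ->
  in_OD D b /\ [/\ in_OD D a, in_OD D c & P] <->
  [/\ [/\ A1 \is a Num.int, A2 \is a Num.int, C1 \is a Num.int & C2 \is a Num.int], Q &
      [/\ in_OD D (A1 / 2, A2 / 2), in_OD D b & in_OD D (C1 / 2, C2 / 2)]].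
Proof.
move=> D1 -> -> PQ; split=> [[Hb [Ha Hc /PQ HQ]] | [_ /PQ HP [Ha Hb Hc]]] //.
have [? ?] := in_OD_halves_int D1 Ha; have [? ?] := in_OD_halves_int D1 Hc.
by split.
Qed.

Lemma in_OD_int_conditions D (a c : qd) (A1 A2 C1 C2 : rat) (P Q : Prop) :
  (D %% 4)%Z != 1 -> a = (A1, A2) -> c = (C1, C2) -> (P <-> Q) ->
  [/\ in_OD D a, in_OD D c & P] <->
  [/\ [/\ A1 \is a Num.int, A2 \is a Num.int, C1 \is a Num.int & C2 \is a Num.int] & Q].
Proof.
move=> D1 -> -> PQ.
split=> [[/(in_OD_int D1)[? ?] /(in_OD_int D1)[? ?] /PQ ?] | [[? ? ? ?] /PQ ?]].
  by split.
by split=> //; apply/(in_OD_int D1).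
Qed.

Theorem theorem3p2 (D : int) (p : nat) (z : qd) :
  squarefree_int D -> D != 1 -> prime p ->
  irreducible_OD D (qint p) -> ~ prime_OD D (qint p) ->
  Ip D (qint p) z ->
  let k : rat := qnorm D z / p%:R in
  let d : rat := D%:~R in
  let q : rat := p%:R in
  [/\
   (* Case 1 *)
   ((D %% 4)%Z = 1 ->
   forall z1 z2 : int, ~~ (2 %| z1)%Z -> ~~ (2 %| z2)%Z ->
   z = (z1%:~R / 2, z2%:~R / 2) ->
   let x1 : rat := z1%:~R in let x2 : rat := z2%:~R in
   (CZ D p z <->
    exists b1 b2 : int,
      let y1 : rat := b1%:~R in let y2 : rat := b2%:~R in
      let a1 := (4 * q - x1 * y1 + x2 * y2 * d) / (2 * q) in
      let a2 := (x2 * y1 - x1 * y2) / (2 * q) in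
      let c1 := (- (x1 ^+ 2 + x2 ^+ 2 * d) * y1 + 2 * x1 * x2 * d * y2 + 4 * x1 * q)
                / (4 * q ^+ 2) in
      let c2 := (2 * x1 * x2 * y1 - (x1 ^+ 2 + x2 ^+ 2 * d) * y2 - 4 * x2 * q)
                / (4 * q ^+ 2) in
      [/\ [/\ a1 \is a Num.int, a2 \is a Num.int, c1 \is a Num.int & c2 \is a Num.int],
          0 = (q + k) * y1 ^+ 2 - (q + k) * d * y2 ^+ 2 - 2 * x1 * y1
              + 2 * x2 * y2 * d + 4 * q - 4 * q ^+ 2 &
          [/\ in_OD D (a1 / 2, a2 / 2), in_OD D (y1 / 2, y2 / 2)
            & in_OD D (c1 / 2, c2 / 2)]])),
   (* Case 2 *)
   ((D %% 4)%Z = 1 ->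
   forall z1 z2 : int, z = (z1%:~R, z2%:~R) ->
   let x1 : rat := z1%:~R in let x2 : rat := z2%:~R in
   (CZ D p z <->
    exists b1 b2 : int,
      let y1 : rat := b1%:~R in let y2 : rat := b2%:~R in
      let a1 := (2 * q - x1 * y1 + x2 * y2 * d) / q in
      let a2 := (x2 * y1 - x1 * y2) / q in
      let c1 := (- (x1 ^+ 2 + x2 ^+ 2 * d) * y1 + 2 * x1 * x2 * d * y2 + 2 * x1 * q)
                / (q ^+ 2) in
      let c2 := (2 * x1 * x2 * y1 - (x1 ^+ 2 + x2 ^+ 2 * d) * y2 - 2 * x2 * q)
                / (q ^+ 2) in
      [/\ [/\ a1 \is a Num.int, a2 \is a Num.int, c1 \is a Num.int & c2 \is a Num.int],
          0 = (q + k) * y1 ^+ 2 - (q + k) * d * y2 ^+ 2 - 4 * x1 * y1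
              + 4 * x2 * y2 * d + 4 * q - 4 * q ^+ 2 &
          [/\ in_OD D (a1 / 2, a2 / 2), in_OD D (y1 / 2, y2 / 2)
            & in_OD D (c1 / 2, c2 / 2)]]))
   &
   (* Case 3 *)
   (((D %% 4)%Z = 2 \/ (D %% 4)%Z = 3) ->
   forall z1 z2 : int, z = (z1%:~R, z2%:~R) ->
   let x1 : rat := z1%:~R in let x2 : rat := z2%:~R in
   (CZ D p z <->
    exists b1 b2 : int,
      let y1 : rat := b1%:~R in let y2 : rat := b2%:~R in
      let a1 := (q - x1 * y1 + x2 * y2 * d) / q in
      let a2 := (x2 * y1 - x1 * y2) / q in
      let c1 := (- (x1 ^+ 2 + x2 ^+ 2 * d) * y1 + 2 * x1 * x2 * d * y2 + x1 * q)
                / (q ^+ 2) in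
      let c2 := (2 * x1 * x2 * y1 - (x1 ^+ 2 + x2 ^+ 2 * d) * y2 - x2 * q)
                / (q ^+ 2) in
      [/\ [/\ a1 \is a Num.int, a2 \is a Num.int, c1 \is a Num.int & c2 \is a Num.int] &
          0 = (q + k) * y1 ^+ 2 - (q + k) * d * y2 ^+ 2 - 2 * x1 * y1
              + 2 * x2 * d * y2 + q - q ^+ 2]))].
Proof.
move=> _ _ /prime_gt0 p_gt0 _ _ _; cbv zeta.
have p_neq0 : (p%:R : rat) != 0 by rewrite pnatr_eq0 -lt0n.
have p4_neq0 : (4 * p%:R : rat) != 0 by rewrite mulf_neq0.
split=> [D1 z1 z2 _ _ -> | D1 z1 z2 -> | D23 z1 z2 ->].
1,2: rewrite CZ_iff // ex_in_OD_halves //; apply: ex2_iff => b1 b2.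
1,2: rewrite cz_cE cz_aE /=; apply: in_OD_halves_conditions => //; try by congr pair; field.
1,2: by apply: (eq_iff_scaled p4_neq0); rewrite /qnorm /=; field.
have D1 : (D %% 4)%Z != 1 by case: D23 => ->.
rewrite CZ_iff // ex_in_OD_int //; apply: ex2_iff => b1 b2.
rewrite cz_cE cz_aE /=; apply: in_OD_int_conditions => //; try by congr pair; field.
by apply: (eq_iff_scaled p_neq0); rewrite /qnorm /=; field.
Qed.
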